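(* Let $\mathcal{D}$ be any basic action theory whose initial theory includes the axiom $$(\star)\quad [\forall \vec x\, \exists \iota \textstyle\bigwedge_i f_i(\iota) = x_i] \land [\forall \iota,\iota'.\ \textstyle\bigwedge_i f_i(\iota) = f_i(\iota') \supset \iota = \iota'],$$ let $\phi$ be any situation-suppressed $\mathcal{L}$-formula, and let $\alpha$ be any sequence of ground action terms. Then $$\frac{1}{\gamma}\sum_{\{s':\phi[s']\}} p(s',do(\alpha,S_0)) \quad\text{and}\quad \frac{1}{\gamma'}\sum_{\vec x}\langle \iota.\ \textstyle\bigwedge_i f_i(\iota) = x_i \land \phi[do(\alpha,\iota)] \to p(do(\alpha,\iota),do(\alpha,S_0))\rangle$$ define the same number (in every $\mathbb{R}$-interpretation satisfying $\mathcal{D}$), where $\gamma,\gamma'$ are the respective numerators with $\phi$ replaced by $\mathit{true}$.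
   Context: Situation calculus: a many-sorted language $\mathcal{L}$ with sorts action, situation, object; $do(a,s)$ is the successor of $s$ under action $a$, and for $\alpha=[a_1,\ldots,a_k]$, $do(\alpha,s)$ is $do(a_k,do(\ldots,do(a_1,s)\ldots))$; $S_0$ is the actual initial situation; $\mathit{Init}(s) \doteq \neg\exists a,s'.\, s = do(a,s')$; $\iota,\iota'$ range over initial situations. $f_1,\ldots,f_n$ are all the fluents, each taking only a situation argument and values in a finite set; $\vec x$ ranges over value vectors, $i$ over $1..n$. $\phi[s]$ restores situation argument $s$ in $\phi$. $\langle z.\ \psi \to t\rangle = u$ abbreviates $[(\exists z\psi)\supset \forall z(\psi \supset u = t)] \land [(\neg\exists z\psi) \supset u = 0]$. Distinguished symbols: $\mathit{Poss}(a,s)$, $p(s',s)$ (weight of $s'$ when in $s$), $l(a,s)$ (likelihood). A basic action theory consists of $\mathcal{D}_0$ containing (P1) $\forall \iota,s.\ p(s,\iota) \ge 0 \land (p(s,\iota) > 0 \supset \mathit{Init}(s))$; precondition axioms; successor state axioms including (P2) $p(s',do(a,s)) = u \equiv \exists s''[s' = do(a,s'') \land \mathit{Poss}(a,s'') \land u = p(s'',s)\times l(a,s'')] \lor \neg\exists s''[s'=do(a,s'')\land \mathit{Poss}(a,s'')] \land u = 0$; likelihood axioms; foundational axioms. Entailment is over $\mathbb{R}$-interpretations. Finite sums are abbreviations for second-order formulas. *)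

From HB Require Import structures.
From mathcomp Require Import all_boot all_order all_algebra.
From mathcomp Require Import boolp classical_sets fsbigop reals.
Set Implicit Arguments. Unset Strict Implicit. Unset Printing Implicit Defensive.
Import Order.TTheory GRing.Theory Num.Theory.
Local Open Scope ring_scope.

(* Situations of an interpretation satisfying the foundational axioms
   (multiple initial situations): every situation is do(alpha, iota) for a
   unique initial situation iota and a unique action sequence alpha. *)
Notation sit I A := (I * seq A)%type.

Definition do_ {I A : Type} (a : A) (s : sit I A) : sit I A := (s.1, rcons s.2 a).
Definition doseq {I A : Type} (al : seq A) (s : sit I A) : sit I A := (s.1, s.2 ++ al).
Definition isit {I A : Type} (i : I) : sit I A := (i, [::]).
Definition Init {I A : Type} (s : sit I A) : Prop := ~ exists a s', s = do_ a s'.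

(* The abbreviation  < z. psi -> t > = u  *)
Definition cond_term {I : Type} {R : numDomainType}
  (psi : I -> Prop) (t : I -> R) (u : R) : Prop :=
  ((exists z, psi z) -> forall z, psi z -> u = t z) /\
  (~ (exists z, psi z) -> u = 0).

Definition axP1 {I A : Type} {R : numDomainType} (p : sit I A -> sit I A -> R) : Prop :=
  forall (i : I) (s : sit I A),
    0 <= p s (isit i) /\ (0 < p s (isit i) -> Init s).

Definition axP2 {I A : Type} {R : numDomainType} (Poss : A -> sit I A -> Prop)
  (p : sit I A -> sit I A -> R) (l : A -> sit I A -> R) : Prop :=
  forall (s' : sit I A) (a : A) (s : sit I A) (u : R),
    p s' (do_ a s) = u <->
    (exists s'', s' = do_ a s'' /\ Poss a s'' /\ u = p s'' s * l a s'')
    \/ ((~ exists s'', s' = do_ a s'' /\ Poss a s'') /\ u = 0).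

Definition axStar {I A : Type} {n : nat} {V : 'I_n -> finType}
  (f : forall i : 'I_n, sit I A -> V i) : Prop :=
  (forall x : {dffun forall i : 'I_n, V i}, exists iota : I,
      forall i : 'I_n, f i (isit iota) = x i) /\
  (forall iota iota' : I,
      (forall i : 'I_n, f i (isit iota) = f i (isit iota')) -> iota = iota').

(** By the foundational axioms every situation is [do(beta, iota)] for a
    unique initial [iota] and action sequence [beta].  Axioms (P1) and (P2)
    confine the support of [p(., do(alpha, S0))] to the situations
    [do(alpha, iota)], and axiom (star) indexes the initial situations
    bijectively by the value vectors [x].  Reindexing the sum over situations
    by [x] therefore turns each summand [p(s', do(alpha, S0))] with [phi[s']]
    into the [x]-th conditional term, so the two numerators agree, and so do
    the two normalisers. *)
From HB Require Import structures.
From mathcomp Require Import all_boot all_order all_algebra.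
From mathcomp Require Import boolp classical_sets functions fsbigop reals.
Set Implicit Arguments. Unset Strict Implicit. Unset Printing Implicit Defensive.
Import Order.TTheory GRing.Theory Num.Theory.
Local Open Scope classical_set_scope.
Local Open Scope ring_scope.

Lemma fsbigT_fin {R : Type} {idx : R} {op : Monoid.com_law idx} (X : finType)
    (F : X -> R) :
  \big[op/idx]_(x \in [set: X]) F x = \big[op/idx]_x F x.
Proof.
rewrite (fsbigE (enum X)) ?enum_uniq // => [|x _]; last by rewrite mem_enum.
by rewrite big_enum_cond; apply: eq_bigl => x; rewrite in_setT.
Qed.

Lemma fsbigT_inj_range {R : Type} {idx : R} {op : Monoid.com_law idx}
    (X : finType) (J : choiceType) (h : X -> J) (F : J -> R) :
    injective h -> (forall j, ~ range h j -> F j = idx) ->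
  \big[op/idx]_(j \in [set: J]) F j = \big[op/idx]_x F (h x).
Proof.
move=> h_inj F0; rewrite -(fsbig_widen (range h)) // => [|j [_ /F0 //]].
by rewrite fsbig_image ?fsbigT_fin //; apply: in2W.
Qed.

Lemma cond_term_unique (I : Type) (R : numDomainType) (psi : I -> Prop)
    (t : I -> R) (u : R) (z : I) :
    (forall z', psi z' -> z' = z) -> cond_term psi t u ->
  u = if `[< psi z >] then t z else 0.
Proof.
move=> psi_z [u_t u_0]; case: asboolP => [psiz | Npsiz].
  by apply: u_t => //; exists z.
by apply: u_0 => -[z' psiz']; apply: Npsiz; rewrite -(psi_z z').
Qed.

Lemma Init_isit (I A : Type) (s : sit I A) : Init s -> s = isit s.1.
Proof.
case: s => iota; case/lastP => [|beta a] // s_init.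
by case: s_init; exists a, (iota, beta).
Qed.

Lemma doseq0 (I A : Type) (s : sit I A) : doseq [::] s = s.
Proof. by case: s => iota beta; rewrite /doseq cats0. Qed.

Lemma doseq_rcons (I A : Type) (beta : seq A) (a : A) (s : sit I A) :
  doseq (rcons beta a) s = do_ a (doseq beta s).
Proof. by rewrite /doseq /do_ /= rcons_cat. Qed.

Section WeightSupport.
Variables (R : numDomainType) (I A : Type).
Variables (Poss : A -> sit I A -> Prop) (p : sit I A -> sit I A -> R).
Variable l : A -> sit I A -> R.
Hypotheses (HP1 : axP1 p) (HP2 : axP2 Poss p l).

Lemma p_isit_support (iota : I) (s : sit I A) :
  p s (isit iota) != 0 -> s = isit s.1.
Proof.
move=> ps_neq0; have [ps_ge0 ps_init] := HP1 iota s.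
by apply/Init_isit/ps_init; rewrite lt0r ps_neq0 ps_ge0.
Qed.

Lemma p_do_support (a : A) (s s' : sit I A) :
  p s' (do_ a s) != 0 -> exists2 s'', s' = do_ a s'' & p s'' s != 0.
Proof.
case: (proj1 (HP2 s' a s _) erefl) => [[s'' [s'E [_ ->]]]|[_ ->]].
  move=> pl_neq0; exists s'' => //.
  by move: pl_neq0; apply: contraNneq => ->; rewrite mul0r.
by rewrite eqxx.
Qed.

Lemma p_doseq_support (beta : seq A) (s s' : sit I A) :
  p s' (doseq beta s) != 0 -> exists2 s'', s' = doseq beta s'' & p s'' s != 0.
Proof.
elim/last_ind: beta s' => [|beta a IH] s' ps'_neq0.
  by rewrite doseq0 in ps'_neq0; exists s'; rewrite ?doseq0.
move: ps'_neq0; rewrite doseq_rcons => /p_do_support [s1 -> /IH [s'' -> ps''_neq0]].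
by exists s''; rewrite ?doseq_rcons.
Qed.

Lemma p_doseq_isit_support (beta : seq A) (iota : I) (s : sit I A) :
  p s (doseq beta (isit iota)) != 0 -> exists iota', s = doseq beta (isit iota').
Proof.
case/p_doseq_support => s'' -> /p_isit_support s''E.
by exists s''.1; rewrite -s''E.
Qed.

End WeightSupport.

Section InitialValues.
Variables (I A : Type) (n : nat) (V : 'I_n -> finType).
Variable f : forall i : 'I_n, sit I A -> V i.

Definition init_values (iota : I) : {dffun forall i : 'I_n, V i} :=
  [ffun i => f i (isit iota)].

Lemma init_valuesP (iota : I) (x : {dffun forall i : 'I_n, V i}) :
  (forall i, f i (isit iota) = x i) <-> init_values iota = x.
Proof.
split=> [fx | <- i]; last by rewrite ffunE.
by apply/ffunP => i; rewrite ffunE fx.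
Qed.

Lemma init_values_bij : axStar f -> bijective init_values.
Proof.
case=> /choice [e eP] f_inj.
have eK : cancel e init_values by move=> x; apply/init_valuesP.
by exists e => // iota; apply: f_inj => i; rewrite eP ffunE.
Qed.

End InitialValues.

Section ReindexByInitialValues.
Variables (R : numDomainType) (I A : choiceType) (n : nat) (V : 'I_n -> finType).
Variables (f : forall i : 'I_n, sit I A -> V i) (alpha : seq A).
Variable w : sit I A -> R.
Hypothesis Hstar : axStar f.
Hypothesis w_support : forall s, w s != 0 -> exists iota, s = doseq alpha (isit iota).

Lemma fsbig_cond_term (Q : sit I A -> Prop) (UQ : {dffun forall i : 'I_n, V i} -> R) :
    (forall x : {dffun forall i : 'I_n, V i}, cond_term
       (fun iota => (forall i, f i (isit iota) = x i) /\ Q (doseq alpha (isit iota)))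
       (fun iota => w (doseq alpha (isit iota))) (UQ x)) ->
  \sum_(s \in [set s | Q s]) w s = \sum_x UQ x.
Proof.
move=> UQ_cond; have [e init_valuesK eK] := init_values_bij Hstar.
pose h x := doseq alpha (isit (e x)) : sit I A.
have h_inj : injective h.
  by move=> x y /(congr1 fst) /= /(congr1 (init_values f)); rewrite !eK.
rewrite fsbig_mkcond (fsbigT_inj_range h_inj); last first.
  move=> s s_out; rewrite /patch; case: ifP => // _.
  have [//|/w_support [iota s_alpha]] := eqVneq (w s) 0.
  by case: s_out; exists (init_values f iota); rewrite // /h init_valuesK.
apply: eq_bigr => x _.
rewrite (cond_term_unique (z := e x) _ (UQ_cond x)); last first.
  by move=> z [/init_valuesP <- _]; rewrite init_valuesK.
rewrite /patch; congr (if _ then _ else _).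
apply/idP/asboolP => [/set_mem Qh | [_ /mem_set //]].
by split=> //; apply/init_valuesP/eK.
Qed.

End ReindexByInitialValues.

Theorem mainTheorem11
  (R : realType) (I A : choiceType) (n : nat) (V : 'I_n -> finType)
  (f : forall i : 'I_n, sit I A -> V i)
  (Poss : A -> sit I A -> Prop)
  (p : sit I A -> sit I A -> R) (l : A -> sit I A -> R)
  (S0 : I)
  (HP1 : axP1 p) (HP2 : axP2 Poss p l) (Hstar : axStar f)
  (phi : sit I A -> Prop) (alpha : seq A)
  (U U' : {dffun forall i : 'I_n, V i} -> R)
  (HU : forall x : {dffun forall i : 'I_n, V i}, cond_term
          (fun iota => (forall i, f i (isit iota) = x i) /\ phi (doseq alpha (isit iota)))
          (fun iota => p (doseq alpha (isit iota)) (doseq alpha (isit S0))) (U x))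
  (HU' : forall x : {dffun forall i : 'I_n, V i}, cond_term
          (fun iota => (forall i, f i (isit iota) = x i) /\ True)
          (fun iota => p (doseq alpha (isit iota)) (doseq alpha (isit S0))) (U' x)) :
  (\sum_(s' \in [set s | phi s]) p s' (doseq alpha (isit S0))) /
    (\sum_(s' \in [set s | True]) p s' (doseq alpha (isit S0)))
  = (\sum_(x : {dffun forall i : 'I_n, V i}) U x) / (\sum_(x : {dffun forall i : 'I_n, V i}) U' x).
Proof.
have support := p_doseq_isit_support HP1 HP2 (beta := alpha) (iota := S0).
rewrite (fsbig_cond_term Hstar support HU).
by rewrite (fsbig_cond_term Hstar support (Q := fun _ => True) HU').
Qed.
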